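(* For every integer $n\ge 0$, the strong product $P_3\boxtimes (R_n\ast K_1)$ is $1$-perfectly orientable.
   Context: All graphs are finite and simple. An orientation of a graph $G$ is $1$-perfect if the out-neighborhood of every vertex induces a clique in $G$; $G$ is $1$-perfectly orientable if it admits a $1$-perfect orientation. The strong product $G\boxtimes H$ has vertex set $V(G)\times V(H)$, with distinct $(u,v),(u',v')$ adjacent iff $u'\in N_G[u]$ and $v'\in N_H[v]$ (closed neighborhoods). $P_3$ is the path on $3$ vertices. For an integer $n\ge 0$, the raft $R_n$ is the graph with vertex set $X\cup Y$, where $X=\{x_0,\dots,x_n\}$ and $Y=\{y_0,\dots,y_n\}$ are disjoint cliques, and, for $0\le i,j\le n$, $x_i$ is adjacent to $y_j$ iff $i+j\ge n+1$ (no other edges). $R_n\ast K_1$ is $R_n$ with an added vertex adjacent to all vertices of $R_n$. *)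

From mathcomp Require Import all_boot.
Set Implicit Arguments. Unset Strict Implicit. Unset Printing Implicit Defensive.

Definition simple_graph (T : finType) (e : rel T) : Prop :=
  (forall x, ~~ e x x) /\ (forall x y, e x y = e y x).

Definition is_orientation (T : finType) (e o : rel T) : Prop :=
  (forall x y, o x y -> e x y) /\ (forall x y, e x y -> o x y (+) o y x).

Definition one_perfect (T : finType) (e o : rel T) : Prop :=
  forall v x y, o v x -> o v y -> x != y -> e x y.

Definition one_perfectly_orientable (T : finType) (e : rel T) : Prop :=
  exists o : rel T, is_orientation e o /\ one_perfect e o.

Definition strong_prod (T1 T2 : finType) (e1 : rel T1) (e2 : rel T2) : rel (T1 * T2) :=
  fun p q => [&& p != q, (p.1 == q.1) || e1 p.1 q.1 & (p.2 == q.2) || e2 p.2 q.2].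

Definition P3 : rel 'I_3 := fun i j => (i.+1 == j :> nat) || (j.+1 == i :> nat).

(* The raft R_n: vertex (false, i) is x_i, vertex (true, j) is y_j, i,j in 0..n. *)
Definition raft (n : nat) : rel (bool * 'I_n.+1) :=
  fun p q => (p != q) &&
    (if p.1 == q.1 then true else n.+1 <= p.2 + q.2).

Arguments raft n : clear implicits.

(* R_n * K_1: the apex is None. *)
Definition raft_K1 (n : nat) : rel (option (bool * 'I_n.+1)) :=
  fun p q => match p, q with
             | None, None => false
             | None, Some _ | Some _, None => true
             | Some a, Some b => raft n a b
             end.
Arguments raft_K1 n : clear implicits.

(* A graph is 1-perfectly orientable as soon as every vertex v can choose a
   clique K(v) such that every edge uv has v in K(u) or u in K(v): orient u -> v
   when v lies in K(u), breaking ties by a fixed linear order, so that every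
   out-neighbourhood sits inside a clique.  In P_3 ⊠ (R_n ∗ K_1) each vertex
   chooses the product of an edge of P_3 with one of the threshold cliques
   C_m = {apex} ∪ {x_i : m <= i} ∪ {y_j : n+1 <= m + j} of R_n ∗ K_1.  Vertices
   of the outer layers choose the edge towards the middle layer; in the middle
   layer the x_i choose the edge {1,2} and the y_j the edge {0,1}.  The thresholds
   are tuned so that every edge is covered, which is a finite check on the
   indices. *)

From mathcomp Require Import all_boot zify.
Set Implicit Arguments. Unset Strict Implicit. Unset Printing Implicit Defensive.

Definition is_clique (T : finType) (e : rel T) (A : pred T) : Prop :=
  {in A &, forall x y, x != y -> e x y}.

Lemma one_perfectly_orientable_of_cliques (T : finType) (e : rel T) (K : T -> pred T) :
  simple_graph e -> (forall v, is_clique e (K v)) ->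
  (forall x y, e x y -> (y \in K x) || (x \in K y)) ->
  one_perfectly_orientable e.
Proof.
move=> [e_irr e_sym] K_clique K_cover.
exists [rel x y | [&& e x y, y \in K x & (x \in K y) ==> (enum_rank x < enum_rank y)]].
split; first split=> [x y /and3P[] // | x y exy /=].
- have neq_xy : x != y by apply: contraTneq exy => ->; exact: e_irr.
  have neq_rank : enum_rank x != enum_rank y by rewrite (inj_eq enum_rank_inj).
  rewrite -[e y x]e_sym exy /=.
  move: (K_cover x y exy); case: (y \in K x); case: (x \in K y) => //= _.
  by move: neq_rank; case: ltngtP => // /val_inj ->; rewrite eqxx.
- by move=> v x y /and3P[_ xK _] /and3P[_ yK _]; exact: (K_clique v).
Qed.

Lemma strong_prod_simple (T1 T2 : finType) (e1 : rel T1) (e2 : rel T2) :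
  simple_graph e1 -> simple_graph e2 -> simple_graph (strong_prod e1 e2).
Proof.
move=> [_ e1_sym] [_ e2_sym]; split=> [p | p q]; first by rewrite /strong_prod eqxx.
by rewrite /strong_prod eq_sym e1_sym e2_sym [p.1 == _]eq_sym [p.2 == _]eq_sym.
Qed.

Lemma strong_prod_clique (T1 T2 : finType) (e1 : rel T1) (e2 : rel T2)
    (A : pred T1) (B : pred T2) :
  is_clique e1 A -> is_clique e2 B ->
  is_clique (strong_prod e1 e2) (fun p => A p.1 && B p.2).
Proof.
move=> cA cB p q /andP[Ap1 Bp2] /andP[Aq1 Bq2] neq_pq.
rewrite /strong_prod neq_pq /=.
by apply/andP; split; [case: eqP => [//|/eqP]; exact: cA | case: eqP => [//|/eqP]; exact: cB].
Qed.

Lemma P3_simple : simple_graph P3.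
Proof. by split=> [i | i j]; rewrite /P3; [lia | exact: orbC]. Qed.

Lemma raft_K1_simple n : simple_graph (raft_K1 n).
Proof.
split=> [[a|] | [a|] [b|]] //=; rewrite /raft ?eqxx //.
by rewrite eq_sym [a.1 == _]eq_sym addnC.
Qed.

Definition P3_edge (upper : bool) : pred 'I_3 :=
  fun l => if upper then 0 < l else l < 2.

Lemma P3_edge_is_clique upper : is_clique P3 (P3_edge upper).
Proof.
move=> i j; rewrite /P3_edge /P3 -val_eqE; have := ltn_ord i; have := ltn_ord j.
by case: upper => /=; rewrite !unfold_in /=; lia.
Qed.

(* For m = 0, ..., n+1 these are exactly the maximal cliques of R_n ∗ K_1. *)
Definition threshold_clique n (m : nat) : pred (option (bool * 'I_n.+1)) :=
  fun v => match v with
           | None => true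
           | Some (false, i) => m <= i
           | Some (true, j) => n < m + j
           end.
Arguments threshold_clique n m : clear implicits.

Lemma threshold_clique_is_clique n m : is_clique (raft_K1 n) (threshold_clique n m).
Proof.
by move=> [[[] i]|] [[[] j]|] //; rewrite !unfold_in /= /raft /= => Ci Cj neq;
  rewrite ?andbT //; lia.
Qed.

Notation vertex n := ('I_3 * option (bool * 'I_n.+1))%type.

(* The apex of the middle layer lies in every chosen clique, so its own choice
   is irrelevant. *)
Definition chosen_side n (p : vertex n) : bool :=
  if p.1 == 1 :> nat then (if p.2 is Some (false, _) then true else false)
  else p.1 == 2 :> nat.

Definition chosen_threshold n (p : vertex n) : nat :=
  match p.2 with
  | None => if p.1 == 2 :> nat then n.+1 else 0
  | Some (false, i) => if p.1 == 0 :> nat then 0 else i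
  | Some (true, j) => if p.1 == 2 :> nat then n.+1 else n.+1 - j
  end.

Definition chosen_clique n (p : vertex n) : pred (vertex n) :=
  fun q => P3_edge (chosen_side p) q.1 && threshold_clique n (chosen_threshold p) q.2.

Lemma chosen_clique_is_clique n (p : vertex n) :
  is_clique (strong_prod P3 (raft_K1 n)) (chosen_clique p).
Proof.
by apply: strong_prod_clique; [exact: P3_edge_is_clique | exact: threshold_clique_is_clique].
Qed.

Lemma chosen_clique_same_layer n (p q : vertex n) : p.1 = q.1 -> raft_K1 n p.2 q.2 ->
  (q \in chosen_clique p) || (p \in chosen_clique q).
Proof.
case: p q => [[[|[|[|l]]] hl] u] [l' v] //= <- {l'}; rewrite !unfold_in /chosen_clique /=.
all: case: u => [[[] i]|]; case: v => [[[] j]|] //=.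
all: by rewrite /chosen_threshold /raft /= ?orbT //; lia.
Qed.

Lemma chosen_clique_adjacent_layers n (p q : vertex n) :
  p.1 != 1 :> nat -> q.1 = 1 :> nat -> (p.2 == q.2) || raft_K1 n p.2 q.2 ->
  (q \in chosen_clique p) || (p \in chosen_clique q).
Proof.
case: p q => [[[|[|[|l]]] hl] u] [[[|[|[|l']]] hl'] v] //= _ _.
all: rewrite !unfold_in /chosen_clique /=.
all: case/orP => [/eqP <-|];
  [case: u => [[[] i]|] | case: u => [[[] i]|]; case: v => [[[] j]|]] => //=.
all: by rewrite /chosen_threshold /raft /= ?orbT //; lia.
Qed.

Lemma chosen_clique_cover n (p q : vertex n) : strong_prod P3 (raft_K1 n) p q ->
  (q \in chosen_clique p) || (p \in chosen_clique q).
Proof.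
case/and3P=> neq_pq layers vertices.
have [eq_layer | neq_layer] := eqVneq p.1 q.1.
  have neq_v : p.2 != q.2.
    by apply: contraNneq neq_pq => eq_v; apply/eqP/injective_projections.
  apply: chosen_clique_same_layer => //.
  by rewrite (negbTE neq_v) in vertices.
have : P3 p.1 q.1 by rewrite (negbTE neq_layer) in layers.
rewrite /P3 => adj_layers; have neq_nat : p.1 != q.1 :> nat := neq_layer.
have [mid_q | mid_p] : q.1 = 1 :> nat \/ p.1 = 1 :> nat.
- by move: adj_layers (ltn_ord p.1) (ltn_ord q.1); lia.
- by apply: chosen_clique_adjacent_layers => //; lia.
- rewrite orbC; apply: chosen_clique_adjacent_layers => //; first lia.
  by rewrite eq_sym (raft_K1_simple n).2.
Qed.

Theorem corollary20 (n : nat) :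
  one_perfectly_orientable (strong_prod P3 (raft_K1 n)).
Proof.
apply: (@one_perfectly_orientable_of_cliques _ _ (@chosen_clique n)).
- exact: strong_prod_simple P3_simple (raft_K1_simple n).
- exact: chosen_clique_is_clique.
- exact: chosen_clique_cover.
Qed.
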